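(* Let $0<p<1$, $q=1-p$, let $\mathcal{B}=\{(x_i,t_i)\}_{i\in\mathbb{Z}}\subset\mathbb{Z}^2$ be a boundary set and $\tilde L$ the associated region, and let $(x^0,t^0)\in\tilde L$. Then the function on $\mathcal{B}$ $$\mathcal{G}^{\mathcal{B}}((x',t')|(x^0,t^0))=P_e^{\mathcal{B}}((x',t'))\,G((x',t')|(x^0,t^0)),\qquad (x',t')\in\mathcal{B},$$ defines a probability measure on $\mathcal{B}$, i.e. it is nonnegative and $\sum_{(x',t')\in\mathcal{B}}\mathcal{G}^{\mathcal{B}}((x',t')|(x^0,t^0))=1$.
   Context: Points of $\mathbb{Z}^2$ are written $(x,t)$ (space, time). A boundary set is $\mathcal{B}=\{(x_i,t_i)\}_{i\in\mathbb{Z}}$ such that for every $i\in\mathbb{Z}$ either $(x_{i+1},t_{i+1})=(x_i+1,t_i)$ or $(x_{i+1},t_{i+1})=(x_i,t_i-1)$. Its region is $\tilde L=\bigcup_{(x,t)\in\mathcal{B}}\{(x',t')\in\mathbb{Z}^2: x'\le x,\ t'\le t\}$, and $\tilde L^c=\mathbb{Z}^2\setminus\tilde L$. Single-step weights of the directed Bernoulli random walk: $W(\{(x,t),(x,t+1)\})=q$, $W(\{(x,t),(x+1,t+1)\})=p$, all other one-step weights zero. The one-particle Green function is $G((x,t)|(x^0,t^0))=\binom{t-t^0}{x-x^0}p^{x-x^0}q^{t-t^0-(x-x^0)}$ if $0\le x-x^0\le t-t^0$ and $0$ otherwise (the total weight of directed paths from $(x^0,t^0)$ to $(x,t)$). The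 exit probability at $(x,t)\in\mathcal{B}$ is $P_e^{\mathcal{B}}((x,t))=\sum_{x'':\,(x'',t+1)\in\tilde L^c}W(\{(x,t),(x'',t+1)\})$. *)

From Stdlib Require Import Reals ZArith Lia Lra ClassicalEpsilon.
From Coquelicot Require Import Coquelicot.
Open Scope R_scope.

(* A boundary set given by its enumeration i |-> (xs i, ts i), i in Z. *)
Definition is_boundary (xs ts : Z -> Z) : Prop :=
  forall i : Z,
    (xs (i + 1)%Z = (xs i + 1)%Z /\ ts (i + 1)%Z = ts i) \/
    (xs (i + 1)%Z = xs i /\ ts (i + 1)%Z = (ts i - 1)%Z).

Definition inL (xs ts : Z -> Z) (x t : Z) : Prop :=
  exists i : Z, (x <= xs i)%Z /\ (t <= ts i)%Z.

Definition W (p : R) (x t x' t' : Z) : R :=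
  if Z.eq_dec t' (t + 1) then
    if Z.eq_dec x' x then 1 - p
    else if Z.eq_dec x' (x + 1) then p else 0
  else 0.

Definition Green (p : R) (x t x0 t0 : Z) : R :=
  if Z_le_dec 0 (x - x0) then
    if Z_le_dec (x - x0) (t - t0) then
      Binomial.C (Z.to_nat (t - t0)) (Z.to_nat (x - x0)) * p ^ (Z.to_nat (x - x0))
      * (1 - p) ^ (Z.to_nat ((t - t0) - (x - x0)))
    else 0
  else 0.

Definition notinL_ind (xs ts : Z -> Z) (x t : Z) : R :=
  if excluded_middle_informative (inL xs ts x t) then 0 else 1.

(* Exit probability P_e((x,t)) = sum over x'' with (x'',t+1) in L~^c of
   W({(x,t),(x'',t+1)}).  Only x'' = x and x'' = x+1 can carry nonzero
   weight, so the sum is written out over these two terms. *)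
Definition Pexit (p : R) (xs ts : Z -> Z) (x t : Z) : R :=
  notinL_ind xs ts x (t + 1) * W p x t x (t + 1)
  + notinL_ind xs ts (x + 1) (t + 1) * W p x t (x + 1) (t + 1).

Definition GB (p : R) (xs ts : Z -> Z) (x0 t0 : Z) (i : Z) : R :=
  Pexit p xs ts (xs i) (ts i) * Green p (xs i) (ts i) x0 t0.

Definition Zpartial (f : Z -> R) (N : nat) : R :=
  sum_f_R0 (fun k => f (Z.of_nat k - Z.of_nat N)%Z) (2 * N).

From Stdlib Require Import Reals ZArith Lia Lra ClassicalEpsilon.
From Coquelicot Require Import Coquelicot.
Open Scope R_scope.

(* A directed walk from (x0, t0) either stays on its diagonal x - t (a p-step) or moves to
   the next diagonal below (a q-step).  The boundary point j lies on diagonal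
   x - t = xs 0 - ts 0 + j, so the boundary meets every diagonal once; let I be the index of
   the source diagonal.  Let flux j be the probability that the walk passes from diagonal j to
   diagonal j - 1 while inside L~ (and flux j = 1 for j > I).  Conservation of mass on
   diagonal j gives G^B_j = flux (j + 1) - flux j, so the symmetric partial sums telescope to
   1 - flux (-N), and flux (-N) -> 0 because the Green function on a fixed column decays in
   time like a binomial times a geometric sequence. *)

Lemma C_pos n k : 0 < Binomial.C n k.
Proof.
  unfold Binomial.C. apply Rdiv_lt_0_compat; [apply lt_0_INR, lt_O_fact|].
  apply Rmult_lt_0_compat; apply lt_0_INR, lt_O_fact.
Qed.

Lemma Green_shift p x0 t0 (a b : nat) :
  Green p (x0 + Z.of_nat a) (t0 + Z.of_nat (a + b)) x0 t0
  = Binomial.C (a + b) a * p ^ a * (1 - p) ^ b.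
Proof.
  unfold Green.
  replace (x0 + Z.of_nat a - x0)%Z with (Z.of_nat a) by lia.
  replace (t0 + Z.of_nat (a + b) - t0)%Z with (Z.of_nat (a + b)) by lia.
  replace (Z.of_nat (a + b) - Z.of_nat a)%Z with (Z.of_nat b) by lia.
  destruct (Z_le_dec 0 (Z.of_nat a)); [|lia].
  destruct (Z_le_dec (Z.of_nat a) (Z.of_nat (a + b))); [|lia].
  now rewrite !Nat2Z.id.
Qed.

Lemma Green_shift_inv x t x0 t0 : (0 <= x - x0 <= t - t0)%Z ->
  exists a b : nat, x = (x0 + Z.of_nat a)%Z /\ t = (t0 + Z.of_nat (a + b))%Z.
Proof.
  intros H. exists (Z.to_nat (x - x0)), (Z.to_nat (t - t0 - (x - x0))). lia.
Qed.

Lemma Green_left p x t x0 t0 : (x < x0)%Z -> Green p x t x0 t0 = 0.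
Proof. intros H. unfold Green. destruct (Z_le_dec 0 (x - x0)); [lia|auto]. Qed.

Lemma Green_right p x t x0 t0 : (t - t0 < x - x0)%Z -> Green p x t x0 t0 = 0.
Proof.
  intros H. unfold Green.
  destruct (Z_le_dec 0 (x - x0)); [|auto].
  destruct (Z_le_dec (x - x0) (t - t0)); [lia|auto].
Qed.

Lemma Green_ge0 p x t x0 t0 : 0 <= p <= 1 -> 0 <= Green p x t x0 t0.
Proof.
  intros Hp.
  destruct (Z_lt_le_dec x x0). { rewrite Green_left by lia; lra. }
  destruct (Z_lt_le_dec (t - t0) (x - x0)). { rewrite Green_right by lia; lra. }
  destruct (Green_shift_inv x t x0 t0) as (a & b & -> & ->); [lia|].
  rewrite Green_shift.
  apply Rmult_le_pos; [apply Rmult_le_pos|]; [apply Rlt_le, C_pos| |]; apply pow_le; lra.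
Qed.

Lemma Green_diag p x0 t0 (k : nat) :
  Green p (x0 + Z.of_nat k) (t0 + Z.of_nat k) x0 t0 = p ^ k.
Proof.
  replace (t0 + Z.of_nat k)%Z with (t0 + Z.of_nat (k + 0))%Z by lia.
  rewrite Green_shift, Nat.add_0_r, C_n_n. simpl. ring.
Qed.

(* Away from the source every path enters (x, t) from (x - 1, t - 1) or from (x, t - 1). *)
Lemma Green_last_step p x t x0 t0 : (x, t) <> (x0, t0) ->
  Green p x t x0 t0
  = p * Green p (x - 1) (t - 1) x0 t0 + (1 - p) * Green p x (t - 1) x0 t0.
Proof.
  intros Hne.
  destruct (Z_lt_le_dec x x0). { rewrite !Green_left by lia. ring. }
  destruct (Z_lt_le_dec (t - t0) (x - x0)).
  { rewrite (Green_right p x t), (Green_right p x (t - 1)) by lia.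
    destruct (Z.eq_dec x x0); [rewrite Green_left by lia | rewrite Green_right by lia]; ring. }
  destruct (Green_shift_inv x t x0 t0) as (a & b & -> & ->); [lia|].
  rewrite Green_shift.
  destruct a as [|a], b as [|b].
  - exfalso. apply Hne. f_equal; lia.
  - rewrite Green_left by lia.
    replace (t0 + Z.of_nat (0 + S b) - 1)%Z with (t0 + Z.of_nat (0 + b))%Z by lia.
    rewrite Green_shift, !C_n_0. simpl. ring.
  - rewrite (Green_right p (x0 + Z.of_nat (S a))) by lia.
    replace (x0 + Z.of_nat (S a) - 1)%Z with (x0 + Z.of_nat a)%Z by lia.
    replace (t0 + Z.of_nat (S a + 0) - 1)%Z with (t0 + Z.of_nat (a + 0))%Z by lia.
    rewrite Green_shift, !Nat.add_0_r, !C_n_n. simpl. ring.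
  - replace (x0 + Z.of_nat (S a) - 1)%Z with (x0 + Z.of_nat a)%Z by lia.
    replace (t0 + Z.of_nat (S a + S b) - 1)%Z with (t0 + Z.of_nat (a + S b))%Z by lia.
    rewrite Green_shift.
    replace (t0 + Z.of_nat (a + S b))%Z with (t0 + Z.of_nat (S a + b))%Z by lia.
    rewrite Green_shift.
    replace (S a + S b)%nat with (S (a + S b)) by lia.
    rewrite <- pascal by lia.
    replace (a + S b)%nat with (S a + b)%nat by lia.
    simpl. ring.
Qed.

Lemma W_up p x t : W p x t x (t + 1) = 1 - p.
Proof.
  unfold W. destruct (Z.eq_dec (t + 1) (t + 1)); [|lia].
  destruct (Z.eq_dec x x); [auto|lia].
Qed.

Lemma W_diag p x t : W p x t (x + 1) (t + 1) = p.
Proof.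
  unfold W. destruct (Z.eq_dec (t + 1) (t + 1)); [|lia].
  destruct (Z.eq_dec (x + 1) x); [lia|].
  destruct (Z.eq_dec (x + 1) (x + 1)); [auto|lia].
Qed.

Lemma notinL_ind_ge0 xs ts x t : 0 <= notinL_ind xs ts x t.
Proof. unfold notinL_ind. destruct excluded_middle_informative; lra. Qed.

Lemma Pexit_ge0 p xs ts x t : 0 <= p <= 1 -> 0 <= Pexit p xs ts x t.
Proof.
  intros Hp. unfold Pexit. rewrite W_up, W_diag.
  pose proof (notinL_ind_ge0 xs ts x (t + 1)).
  pose proof (notinL_ind_ge0 xs ts (x + 1) (t + 1)).
  nra.
Qed.

Lemma GB_ge0 p xs ts x0 t0 i : 0 <= p <= 1 -> 0 <= GB p xs ts x0 t0 i.
Proof. intros Hp. apply Rmult_le_pos; [apply Pexit_ge0 | apply Green_ge0]; exact Hp. Qed.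

Section Boundary.
Variables (xs ts : Z -> Z).
Hypothesis Hb : is_boundary xs ts.

Lemma boundary_step_into j :
  (xs j = (xs (j - 1) + 1)%Z /\ ts j = ts (j - 1)) \/
  (xs j = xs (j - 1) /\ ts j = (ts (j - 1) - 1)%Z).
Proof. specialize (Hb (j - 1)%Z). now replace (j - 1 + 1)%Z with j in Hb by lia. Qed.

Lemma boundary_diagonal i : (xs i - ts i = xs 0 - ts 0 + i)%Z.
Proof.
  induction i using Z.peano_ind.
  - lia.
  - specialize (Hb i). rewrite <- Z.add_1_r. lia.
  - specialize (Hb (Z.pred i)). rewrite Z.add_1_r, Z.succ_pred in Hb. lia.
Qed.

Lemma boundary_monotone j i : (j <= i)%Z -> (xs j <= xs i /\ ts i <= ts j)%Z.
Proof.
  intros Hji. replace i with (j + Z.of_nat (Z.to_nat (i - j)))%Z by lia.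
  induction (Z.to_nat (i - j)) as [|n IH]; [rewrite Z.add_0_r; lia|].
  specialize (Hb (j + Z.of_nat n)%Z).
  rewrite Nat2Z.inj_succ, Z.add_succ_r, <- Z.add_1_r. lia.
Qed.

Lemma inL_le_boundary x t i :
  inL xs ts x t -> (x - t = xs i - ts i)%Z -> (x <= xs i)%Z.
Proof.
  intros [j [Hx Ht]] Hd.
  destruct (Z_le_gt_dec j i).
  - pose proof (boundary_monotone j i). lia.
  - pose proof (boundary_monotone i j). lia.
Qed.

Lemma notinL_ind_inL x t : inL xs ts x t -> notinL_ind xs ts x t = 0.
Proof. intros H. unfold notinL_ind. destruct excluded_middle_informative; tauto. Qed.

Lemma notinL_ind_right_of_boundary x t i :
  (x - t = xs i - ts i)%Z -> (xs i < x)%Z -> notinL_ind xs ts x t = 1.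
Proof.
  intros Hd Hx. unfold notinL_ind. destruct excluded_middle_informative as [HL|]; [|auto].
  pose proof (inL_le_boundary x t i HL Hd). lia.
Qed.

Lemma Pexit_after_right_step p j :
  xs j = (xs (j - 1) + 1)%Z -> ts j = ts (j - 1) -> Pexit p xs ts (xs j) (ts j) = 1.
Proof.
  intros Hx Ht. unfold Pexit. rewrite W_up, W_diag.
  rewrite (notinL_ind_right_of_boundary _ _ (j - 1)) by lia.
  rewrite (notinL_ind_right_of_boundary _ _ j) by lia.
  ring.
Qed.

Lemma Pexit_after_down_step p j :
  xs j = xs (j - 1) -> ts j = (ts (j - 1) - 1)%Z -> Pexit p xs ts (xs j) (ts j) = p.
Proof.
  intros Hx Ht. unfold Pexit. rewrite W_up, W_diag.
  rewrite notinL_ind_inL by (exists (j - 1)%Z; lia).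
  rewrite (notinL_ind_right_of_boundary _ _ j) by lia.
  ring.
Qed.

End Boundary.

Fixpoint sum_first (f : nat -> R) (n : nat) : R :=
  match n with O => 0 | S m => sum_first f m + f m end.

Lemma sum_first_ge0 f n : (forall k, 0 <= f k) -> 0 <= sum_first f n.
Proof. intros Hf. induction n as [|n IH]; simpl; [lra|]. specialize (Hf n). lra. Qed.

Definition diag_sum p x0 t0 (d a : Z) : R :=
  sum_first (fun k => Green p (x0 + Z.of_nat k) (x0 + Z.of_nat k - d) x0 t0)
    (Z.to_nat (a - x0 + 1)).

Lemma Z_ind_from (P : Z -> Prop) (m : Z) :
  P m -> (forall a, (m <= a)%Z -> P a -> P (a + 1)%Z) -> forall a, (m <= a)%Z -> P a.
Proof.
  intros H0 HS a Ha. replace a with (m + Z.of_nat (Z.to_nat (a - m)))%Z by lia.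
  induction (Z.to_nat (a - m)) as [|n IH]; [now rewrite Z.add_0_r|].
  rewrite Nat2Z.inj_succ, Z.add_succ_r, <- Z.add_1_r. apply HS; [lia|exact IH].
Qed.

Section DiagonalSums.
Variables (p : R) (x0 t0 : Z).
Hypothesis Hp : 0 < p < 1.

Lemma diag_sum_below d a : (a < x0)%Z -> diag_sum p x0 t0 d a = 0.
Proof. intros Ha. unfold diag_sum. now replace (Z.to_nat (a - x0 + 1)) with 0%nat by lia. Qed.

Lemma diag_sum_pred d a :
  diag_sum p x0 t0 d a = diag_sum p x0 t0 d (a - 1) + Green p a (a - d) x0 t0.
Proof.
  destruct (Z_lt_le_dec a x0).
  { rewrite !diag_sum_below, Green_left by lia. ring. }
  unfold diag_sum.
  replace (Z.to_nat (a - x0 + 1)) with (S (Z.to_nat (a - 1 - x0 + 1))) by lia.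
  simpl. now replace (x0 + Z.of_nat (Z.to_nat (a - 1 - x0 + 1)))%Z with a by lia.
Qed.

Lemma diag_sum_ge0 d a : 0 <= diag_sum p x0 t0 d a.
Proof. apply sum_first_ge0. intros k. apply Green_ge0. lra. Qed.

Lemma diag_sum_le d a b : (a <= b)%Z -> diag_sum p x0 t0 d a <= diag_sum p x0 t0 d b.
Proof.
  revert b. apply Z_ind_from; [lra|]. intros c _ IH.
  rewrite (diag_sum_pred d (c + 1)), Z.add_simpl_r.
  pose proof (Green_ge0 p (c + 1) (c + 1 - d) x0 t0). lra.
Qed.

(* Summing [Green_last_step] along a diagonal below the source diagonal. *)
Lemma diag_sum_succ d a : (d < x0 - t0)%Z ->
  (1 - p) * diag_sum p x0 t0 d a + p * Green p a (a - d) x0 t0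
  = (1 - p) * diag_sum p x0 t0 (d + 1) a.
Proof.
  intros Hd. destruct (Z_lt_le_dec a (x0 - 1)).
  { rewrite !diag_sum_below, Green_left by lia. ring. }
  revert a l. apply Z_ind_from.
  { rewrite !diag_sum_below, Green_left by lia. ring. }
  intros a _ IH.
  rewrite (diag_sum_pred d (a + 1)), (diag_sum_pred (d + 1) (a + 1)), Z.add_simpl_r.
  replace (a + 1 - (d + 1))%Z with (a - d)%Z by lia.
  rewrite (Green_last_step p (a + 1) (a + 1 - d)) by (intros [=]; lia).
  replace (a + 1 - 1)%Z with a by lia.
  replace (a + 1 - d - 1)%Z with (a - d)%Z by lia.
  transitivity ((1 - p) * diag_sum p x0 t0 d a + p * Green p a (a - d) x0 t0
    + (1 - p) * Green p (a + 1) (a - d) x0 t0); [ring|].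
  rewrite IH. ring.
Qed.

(* On the source diagonal G = p^k, and the identity is the geometric sum
   (1 - p)(1 + ... + p^(k-1)) + p^k = 1. *)
Lemma diag_sum_source a : (x0 <= a)%Z ->
  (1 - p) * diag_sum p x0 t0 (x0 - t0) a + p * Green p a (a - (x0 - t0)) x0 t0 = 1.
Proof.
  assert (Hsrc : forall b, (x0 <= b)%Z ->
    Green p b (b - (x0 - t0)) x0 t0 = p ^ Z.to_nat (b - x0)).
  { intros b Hb. rewrite <- (Green_diag p x0 t0). f_equal; lia. }
  revert a. apply Z_ind_from.
  { rewrite diag_sum_pred, diag_sum_below, Hsrc by lia.
    replace (x0 - x0)%Z with 0%Z by lia. simpl. ring. }
  intros a Ha IH.
  rewrite (diag_sum_pred _ (a + 1)), Z.add_simpl_r, !Hsrc by lia.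
  rewrite Hsrc in IH by lia.
  replace (Z.to_nat (a + 1 - x0)) with (S (Z.to_nat (a - x0))) by lia.
  transitivity ((1 - p) * diag_sum p x0 t0 (x0 - t0) a + p * p ^ Z.to_nat (a - x0));
    [simpl; ring | exact IH].
Qed.

End DiagonalSums.

Lemma binomial_geometric_lim (q : R) (k : nat) : 0 < q < 1 ->
  is_lim_seq (fun n => Binomial.C (k + n) k * q ^ n) 0.
Proof.
  intros Hq. set (u n := Binomial.C (k + n) k * q ^ n).
  assert (Hu : forall n, 0 < u n).
  { intros n. apply Rmult_lt_0_compat; [apply C_pos | apply pow_lt; lra]. }
  assert (Hratio : forall n, Rabs (u (S n) / u n) = q + q * INR k * / INR (S n)).
  { intros n. rewrite Rabs_pos_eq by (apply Rlt_le, Rdiv_lt_0_compat; auto).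
    unfold u. replace (k + S n)%nat with (S (k + n)) by lia.
    rewrite pascal_step2 by lia. replace (S (k + n) - k)%nat with (S n) by lia.
    pose proof (C_pos (k + n) k). pose proof (pow_lt q n (proj1 Hq)).
    rewrite !S_INR, plus_INR. simpl. field. pose proof (pos_INR n). lra. }
  assert (Hlim : is_lim_seq (fun n => Rabs (u (S n) / u n)) q).
  { apply (is_lim_seq_ext (fun n => q + q * INR k * / INR (S n))); [intros n; now rewrite Hratio|].
    assert (H : is_lim_seq (fun n => q + q * INR k * / INR (S n)) (q + q * INR k * 0)).
    { apply is_lim_seq_plus'; [apply is_lim_seq_const|].
      apply is_lim_seq_mult'; [apply is_lim_seq_const|].
      apply (is_lim_seq_inv _ p_infty); [|discriminate].
      apply (is_lim_seq_incr_1 INR p_infty), is_lim_seq_INR. }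
    now rewrite Rmult_0_r, Rplus_0_r in H. }
  apply (is_lim_seq_ext (fun n => Rabs (u n))); [intros n; apply Rabs_pos_eq, Rlt_le, Hu|].
  apply ex_series_lim_0, (ex_series_DAlembert u q);
    [lra | intros n; apply Rgt_not_eq, Hu | exact Hlim].
Qed.

Section Vanishing.
Variables (p : R) (x0 t0 : Z).
Hypothesis Hp : 0 < p < 1.

Lemma Green_vanishes_in_time x t :
  is_lim_seq (fun N : nat => Green p x (t + Z.of_nat N) x0 t0) 0.
Proof.
  destruct (Z_lt_le_dec x x0).
  { apply (is_lim_seq_ext (fun _ => 0)); [intros N; now rewrite Green_left|].
    apply is_lim_seq_const. }
  set (k := Z.to_nat (x - x0)). set (m := Z.to_nat (x - x0 - (t - t0))).
  set (e := Z.to_nat (t - t0 - (x - x0) + Z.of_nat m)).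
  apply (is_lim_seq_incr_n _ m).
  apply (is_lim_seq_ext (fun n => p ^ k * (Binomial.C (k + (n + e)) k * (1 - p) ^ (n + e)))).
  { intros n. replace x with (x0 + Z.of_nat k)%Z by lia.
    replace (t + Z.of_nat (n + m))%Z with (t0 + Z.of_nat (k + (n + e)))%Z by lia.
    rewrite Green_shift. ring. }
  rewrite <- (Rmult_0_r (p ^ k)).
  apply is_lim_seq_mult'; [apply is_lim_seq_const|].
  apply (is_lim_seq_incr_n (fun n => Binomial.C (k + n) k * (1 - p) ^ n) e).
  apply binomial_geometric_lim. lra.
Qed.

Lemma diag_sum_vanishes d a :
  is_lim_seq (fun N : nat => diag_sum p x0 t0 (d - Z.of_nat N) a) 0.
Proof.
  destruct (Z_lt_le_dec a (x0 - 1)).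
  { apply (is_lim_seq_ext (fun _ => 0)); [intros N; now rewrite diag_sum_below by lia|].
    apply is_lim_seq_const. }
  revert a l. apply Z_ind_from.
  { apply (is_lim_seq_ext (fun _ => 0)); [intros N; now rewrite diag_sum_below by lia|].
    apply is_lim_seq_const. }
  intros a _ IH.
  apply (is_lim_seq_ext (fun N => diag_sum p x0 t0 (d - Z.of_nat N) a
                                  + Green p (a + 1) (a + 1 - d + Z.of_nat N) x0 t0)).
  { intros N. rewrite (diag_sum_pred p x0 t0 _ (a + 1)), Z.add_simpl_r. do 2 f_equal. lia. }
  rewrite <- (Rplus_0_r 0).
  apply is_lim_seq_plus'; [exact IH | apply Green_vanishes_in_time].
Qed.

End Vanishing.

Lemma sum_f_R0_telescope (u : nat -> R) n :
  sum_f_R0 (fun k => u (S k) - u k) n = u (S n) - u O.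
Proof. induction n as [|n IH]; simpl; [|rewrite IH]; ring. Qed.

Lemma Zpartial_telescope (f phi : Z -> R) N :
  (forall i, f i = phi (i + 1)%Z - phi i) ->
  Zpartial f N = phi (Z.of_nat N + 1)%Z - phi (- Z.of_nat N)%Z.
Proof.
  intros Hf. unfold Zpartial. pose (u k := phi (Z.of_nat k - Z.of_nat N)%Z).
  rewrite (sum_eq _ (fun k => u (S k) - u k)).
  - rewrite sum_f_R0_telescope. unfold u. f_equal; f_equal; lia.
  - intros k _. unfold u. rewrite Hf. do 2 f_equal; lia.
Qed.

Section ExitMeasure.
Variables (p : R) (xs ts : Z -> Z) (x0 t0 : Z).
Hypotheses (Hp : 0 < p < 1) (Hb : is_boundary xs ts) (HL : inL xs ts x0 t0).

(* The boundary point on the diagonal x - t = x0 - t0 of the source. *)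
Let I := (x0 - t0 - (xs 0 - ts 0))%Z.

(* Probability that the walk steps up from the diagonal x - t = xs j - ts j to the next one
   at a column x <= xs (j - 1), i.e. inside L~. *)
Definition flux (j : Z) : R :=
  if Z_le_dec j I then (1 - p) * diag_sum p x0 t0 (xs j - ts j) (xs (j - 1)) else 1.

Lemma GB_split j :
  GB p xs ts x0 t0 j = p * Green p (xs j) (ts j) x0 t0
    + (1 - p) * (diag_sum p x0 t0 (xs j - ts j) (xs j)
                 - diag_sum p x0 t0 (xs j - ts j) (xs (j - 1))).
Proof.
  unfold GB. rewrite (diag_sum_pred p x0 t0 _ (xs j)).
  replace (xs j - (xs j - ts j))%Z with (ts j) by lia.
  destruct (boundary_step_into xs ts Hb j) as [[Hx Ht] | [Hx Ht]].
  - rewrite Pexit_after_right_step by auto.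
    replace (xs j - 1)%Z with (xs (j - 1)) by lia. ring.
  - rewrite Pexit_after_down_step by auto. rewrite <- Hx.
    rewrite (diag_sum_pred p x0 t0 _ (xs j)).
    replace (xs j - (xs j - ts j))%Z with (ts j) by lia. ring.
Qed.

Lemma GB_flux_difference j : GB p xs ts x0 t0 j = flux (j + 1) - flux j.
Proof.
  pose proof (boundary_diagonal xs ts Hb j) as Hj.
  pose proof (boundary_diagonal xs ts Hb (j + 1)) as Hj1.
  unfold flux. replace (j + 1 - 1)%Z with j by lia.
  destruct (Z_le_dec (j + 1) I), (Z_le_dec j I); try lia.
  - rewrite GB_split.
    replace (xs (j + 1) - ts (j + 1))%Z with (xs j - ts j + 1)%Z by lia.
    rewrite <- diag_sum_succ by lia.
    replace (xs j - (xs j - ts j))%Z with (ts j) by lia. ring.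
  - assert (HI : (xs j - ts j = x0 - t0)%Z) by lia.
    pose proof (inL_le_boundary xs ts Hb x0 t0 j HL ltac:(lia)) as Hx0.
    pose proof (diag_sum_source p x0 t0 (xs j) Hx0) as Hsrc.
    replace (xs j - (x0 - t0))%Z with (ts j) in Hsrc by lia.
    rewrite GB_split, HI. lra.
  - unfold GB. rewrite Green_right by lia. ring.
Qed.

Lemma flux_vanishes : is_lim_seq (fun N : nat => flux (- Z.of_nat N)) 0.
Proof.
  set (d := (xs 0 - ts 0)%Z).
  apply (is_lim_seq_le_le_loc (fun _ => 0) _
           (fun N => (1 - p) * diag_sum p x0 t0 (d - Z.of_nat N) (xs 0%Z))).
  - exists (Z.to_nat (- I)). intros N HN. unfold flux.
    destruct (Z_le_dec (- Z.of_nat N) I); [|lia].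
    replace (xs (- Z.of_nat N) - ts (- Z.of_nat N))%Z with (d - Z.of_nat N)%Z
      by (pose proof (boundary_diagonal xs ts Hb (- Z.of_nat N)); lia).
    pose proof (diag_sum_ge0 p x0 t0 Hp (d - Z.of_nat N) (xs (- Z.of_nat N - 1)%Z)).
    pose proof (diag_sum_le p x0 t0 Hp (d - Z.of_nat N) (xs (- Z.of_nat N - 1)%Z) (xs 0%Z)
                  (proj1 (boundary_monotone xs ts Hb (- Z.of_nat N - 1) 0 ltac:(lia)))).
    split; nra.
  - apply is_lim_seq_const.
  - rewrite <- (Rmult_0_r (1 - p)).
    apply is_lim_seq_mult'; [apply is_lim_seq_const | apply diag_sum_vanishes; exact Hp].
Qed.

Lemma GB_partial_sums_lim : is_lim_seq (Zpartial (GB p xs ts x0 t0)) 1.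
Proof.
  apply (is_lim_seq_ext_loc (fun N => 1 - flux (- Z.of_nat N))).
  - exists (Z.to_nat I). intros N HN.
    assert (Htop : flux (Z.of_nat N + 1) = 1).
    { unfold flux. destruct (Z_le_dec (Z.of_nat N + 1) I); [lia | reflexivity]. }
    now rewrite (Zpartial_telescope _ flux N GB_flux_difference), Htop.
  - assert (H : is_lim_seq (fun N => 1 - flux (- Z.of_nat N)) (1 - 0)).
    { apply is_lim_seq_minus'; [apply is_lim_seq_const | exact flux_vanishes]. }
    now rewrite Rminus_0_r in H.
Qed.

End ExitMeasure.

Theorem proposition3 (p : R) (xs ts : Z -> Z) (x0 t0 : Z) :
  0 < p < 1 ->
  is_boundary xs ts ->
  inL xs ts x0 t0 ->
  (forall i : Z, 0 <= GB p xs ts x0 t0 i) /\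
  is_lim_seq (Zpartial (GB p xs ts x0 t0)) 1.
Proof.
  intros Hp Hb HL. split.
  - intros i. apply GB_ge0. lra.
  - exact (GB_partial_sums_lim p xs ts x0 t0 Hp Hb HL).
Qed.
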